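(* Let $d$ and $m$ be positive integers and let $P$ be a finite poset such that $|P|> m$ and every subset $S$ of $P$ with $|S|>m$ satisfies $\mathrm{comp}(S)\geq |S|d$. Then there exists a function \[f:\binom{P}{\leq |P|/(2d+1)}\to\binom{P}{\leq m}\] such that for every antichain $I\subseteq P$ there is a subset $T\subseteq I$ with $|T|\leq |P|/(2d+1)$, $T\cap f(T)=\emptyset$ and $I\subseteq T\cup f(T)$.
   Context: For a set $X$ and real $j$, $\binom{X}{\leq j}$ denotes the family of all subsets of $X$ of cardinality at most $j$. $\mathrm{comp}(S)$ is the number of unordered pairs of distinct comparable elements of $S$. An antichain is a set of pairwise incomparable elements. *)

From HB Require Import structures.
From mathcomp Require Import all_boot all_order.
Set Implicit Arguments. Unset Strict Implicit. Unset Printing Implicit Defensive.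
Import Order.TTheory.

(* ncomp S : number of unordered pairs of distinct comparable elements of S.
   Each such unordered pair {x,y} corresponds to exactly one ordered pair
   (x,y) with x < y. *)
Definition ncomp (disp : Order.disp_t) (P : finPOrderType disp) (S : {set P}) : nat :=
  #|[set xy : (P * P)%type | [&& xy.1 \in S, xy.2 \in S & (xy.1 < xy.2)%O]]|.

Definition antichain (disp : Order.disp_t) (P : finPOrderType disp) (I : {set P}) : Prop :=
  forall x y, x \in I -> y \in I -> x != y -> ~~ (x >=< y)%O.

From HB Require Import structures.
From mathcomp Require Import all_boot all_order.
From mathcomp Require Import zify.
Import Order.TTheory.

Set Implicit Arguments.
Unset Strict Implicit.
Unset Printing Implicit Defensive.

(* The Kleitman-Winston greedy algorithm on the comparability graph of P: as
   long as the current set A has more than m elements, take a vertex v of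
   maximum degree in A; if v lies in the antichain I, record v in the
   fingerprint T and delete its closed neighbourhood from A, otherwise delete
   v alone.  The final A (the container) is small and contains I \ T.  The run
   consults I only through the picked vertices, so replaying it with I := T
   yields the same container: this is f(T).  By the handshake identity
   sum_x deg x = |A| + 2 comp(A) and the density hypothesis, every picked
   vertex has closed degree at least 2d+1, so |T| (2d+1) <= |P|. *)

Section KleitmanWinston.
Variables (disp : Order.disp_t) (P : finPOrderType disp).
Implicit Types A I O X : {set P}.

Definition closed_nbhd (v : P) : {set P} := [set u | (v >=< u)%O].

Definition deg A v : nat := #|A :&: closed_nbhd v|.

Definition pick_max_deg A : option P :=
  [pick v in A | [forall u in A, deg A u <= deg A v]].

Lemma mem_closed_nbhd v : v \in closed_nbhd v.
Proof. by rewrite inE comparablexx. Qed.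

Lemma pick_max_degP A v : pick_max_deg A = Some v ->
  v \in A /\ forall u, u \in A -> deg A u <= deg A v.
Proof.
rewrite /pick_max_deg; case: pickP => [w /andP[wA /forall_inP wmax]|//] [<-].
by split=> // u /wmax.
Qed.

Lemma pick_max_deg_some A : A != set0 -> exists v, pick_max_deg A = Some v.
Proof.
case/set0Pn=> x xA; rewrite /pick_max_deg; case: pickP => [v _|none]; first by exists v.
case: (arg_maxnP (deg A) xA) => v vA vmax.
by move: (none v); rewrite (vA : v \in A) /= => /negP; case; apply/forall_inP => u /vmax.
Qed.

Lemma deg_sum A : \sum_(x in A) deg A x = #|A| + ncomp A * 2.
Proof.
have degE x : deg A x =
    \sum_(y in A) ((x == y) + ((x < y)%O : nat) + ((y < x)%O : nat)).
  rewrite /deg -sum1_card big_mkcond [RHS]big_mkcond /=; apply: eq_bigr => y _.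
  rewrite !inE; case: (y \in A) => //=.
  by case: (comparableP x y).
have ncompE : ncomp A = \sum_(x in A) \sum_(y in A) ((x < y)%O : nat).
  rewrite /ncomp -sum1_card.
  rewrite (eq_bigl (fun p : P * P => (p.1 \in A) && ((p.2 \in A) && (p.1 < p.2)%O)));
    last by move=> p; rewrite inE.
  rewrite -(pair_big_dep (fun x => x \in A) (fun x y => (y \in A) && (x < y)%O)
                          (fun _ _ => 1)) /=.
  by apply: eq_bigr => x _; rewrite big_mkcondr; apply: eq_bigr => y _; case: (x < y)%O.
rewrite (eq_bigr _ (fun x _ => degE x)); under eq_bigr do rewrite !big_split /=.
rewrite !big_split /= [X in _ + X]exchange_big /= -ncompE muln2 -addnn addnA.
congr (_ + _ + _); rewrite -sum1_card; apply: eq_bigr => x xA.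
by rewrite (bigD1 x) //= eqxx big1 // => y /andP[_ /negbTE]; rewrite eq_sym => ->.
Qed.

Variable m : nat.

(* Fuel n >= #|A| suffices since every step shrinks A. *)
Fixpoint kw O A n : {set P} * {set P} :=
  if n is n'.+1 then
    if m < #|A| then
      if pick_max_deg A is Some v then
        if v \in O then let r := kw O (A :\: closed_nbhd v) n' in (v |: r.1, r.2)
        else kw O (A :\ v) n'
      else (set0, A)
    else (set0, A)
  else (set0, A).

Lemma kw_container_sub O A n : (kw O A n).2 \subset A.
Proof.
elim: n A => [|n IH] A //=; case: ifP => _ //; case: (pick_max_deg A) => [v|] //.
by case: ifP => _; apply: subset_trans (IH _) (subsetDl _ _).
Qed.

Lemma kw_fingerprint_sub O A n : (kw O A n).1 \subset O :&: A.
Proof.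
elim: n A => [|n IH] A /=; first exact: sub0set.
case: ifP => _; last exact: sub0set.
case E: (pick_max_deg A) => [v|]; last exact: sub0set.
have [vA _] := pick_max_degP E.
have sub_rec B : (kw O (A :\: B) n).1 \subset O :&: A.
  exact: subset_trans (IH _) (setIS _ (subsetDl _ _)).
case: ifP => vO //=.
by rewrite subUset sub1set inE vO vA sub_rec.
Qed.

Lemma kw_disjoint O A n : (kw O A n).1 :&: (kw O A n).2 = set0.
Proof.
elim: n A => [|n IH] A /=; first exact: set0I.
case: ifP => _; last exact: set0I.
case: (pick_max_deg A) => [v|]; last exact: set0I.
case: ifP => _ //=.
rewrite setIUl IH setU0; apply/disjoint_setI0; rewrite disjoints1.
by apply/negP => /(subsetP (kw_container_sub _ _ _)); rewrite inE mem_closed_nbhd.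
Qed.

(* An element of I comparable to a picked v in I must be v itself. *)
Lemma kw_cover I A n : antichain I ->
  I :&: A \subset (kw I A n).1 :|: (kw I A n).2.
Proof.
move=> antiI; elim: n A => [|n IH] A /=; first by rewrite set0U subsetIr.
case: ifP => _; last by rewrite set0U subsetIr.
case: (pick_max_deg A) => [v|]; last by rewrite set0U subsetIr.
case: ifP => vI /=.
  apply/subsetP => x /setIP[xI xA]; rewrite -setUA.
  have [->|nxv] := eqVneq x v; first by rewrite setU11.
  have xI' : x \in I :&: (A :\: closed_nbhd v).
    by rewrite !inE xI xA andbT (antiI v x vI xI) // eq_sym.
  by rewrite setU1r // (subsetP (IH _) x xI').
apply: subset_trans (IH _); apply/subsetP => x /setIP[xI xA].
by rewrite !inE xI xA andbT; apply: contraFneq vI => <-.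
Qed.

Lemma kw_container_fingerprint I X A n :
  (kw I A n).1 \subset X -> X \subset I -> (kw X A n).2 = (kw I A n).2.
Proof.
elim: n A => [|n IH] A //=; case: ifP => _ //.
case: (pick_max_deg A) => [v|] //; case: ifP => vI /=.
  by rewrite subUset sub1set => /andP[-> ?] ?; apply: IH.
move=> sTX sXI; have -> : (v \in X) = false := contraFF (subsetP sXI v) vI.
exact: IH.
Qed.

Lemma kw_container_small O A n : #|A| <= n -> #|(kw O A n).2| <= m.
Proof.
elim: n A => [|n IH] A /=; first by rewrite leqn0 => /eqP ->.
case: ifP => [mA|]; last by rewrite ltnNge => /negbFE.
move=> An; have [v E] : exists v, pick_max_deg A = Some v.
  by apply: pick_max_deg_some; rewrite -card_gt0 (leq_ltn_trans _ mA).
have [vA _] := pick_max_degP E; rewrite E.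
case: (v \in O) => /=; apply: IH; rewrite -ltnS; apply: leq_trans An.
  apply/proper_card/properP; split; first exact: subsetDl.
  by exists v; rewrite // inE mem_closed_nbhd.
apply/proper_card/properP; split; first exact: subsetDl.
by exists v; rewrite // !inE eqxx.
Qed.

Variable d : nat.
Hypothesis dense : forall S : {set P}, m < #|S| -> #|S| * d <= ncomp S.

Lemma exists_large_deg A : m < #|A| -> exists2 x, x \in A & 2 * d + 1 <= deg A x.
Proof.
move=> mA; apply/exists_inP; apply: contraLR (dense mA); rewrite negb_exists_in.
move=> /forall_inP small; rewrite -ltnNge.
have : #|A| + ncomp A * 2 <= #|A| * (2 * d).
  by rewrite -deg_sum -sum_nat_const leq_sum // => x /small; rewrite -ltnNge addn1 ltnS.
have : 0 < #|A| by apply: leq_ltn_trans mA.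
lia.
Qed.

Lemma kw_card O A n : #|(kw O A n).1| * (2 * d + 1) + #|(kw O A n).2| <= #|A|.
Proof.
elim: n A => [|n IH] A /=; first by rewrite cards0.
case: ifP => mA; last by rewrite cards0.
case E: (pick_max_deg A) => [v|]; last by rewrite cards0.
have [vA vmax] := pick_max_degP E.
case: ifP => vO /=; last by apply: leq_trans (IH _) _; rewrite subset_leq_card ?subsetDl.
have [x xA degx] := exists_large_deg mA.
have degv : 2 * d + 1 <= deg A v := leq_trans degx (vmax x xA).
have vT : v \notin (kw O (A :\: closed_nbhd v) n).1.
  apply/negP => /(subsetP (kw_fingerprint_sub _ _ _)).
  by rewrite !inE comparablexx andbF.
rewrite cardsU1 vT mulnDl mul1n -addnA.
apply: leq_trans (leq_add degv (IH _)) _.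
by rewrite cardsD -/(deg A v) subnKC // subset_leq_card ?subsetIl.
Qed.

End KleitmanWinston.

Theorem mainTheorem13 (disp : Order.disp_t) (P : finPOrderType disp) (d m : nat) :
  (0 < d)%N -> (0 < m)%N -> (m < #|P|)%N ->
  (forall S : {set P}, (m < #|S|)%N -> (#|S| * d <= ncomp S)%N) ->
  exists f : {set P} -> {set P},
    (forall T : {set P}, (#|T| * (2 * d + 1) <= #|P|)%N -> (#|f T| <= m)%N) /\
    (forall I : {set P}, antichain I ->
       exists T : {set P},
         [/\ T \subset I, (#|T| * (2 * d + 1) <= #|P|)%N,
             T :&: f T = set0 & I \subset T :|: f T]).
Proof.
move=> _ _ _ dense.
exists (fun T => (kw m T setT #|P|).2); split.
  by move=> T _; apply: kw_container_small; rewrite cardsT.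
move=> I antiI; set T := (kw m I setT #|P|).1.
have TI : T \subset I := subset_trans (kw_fingerprint_sub _ _ _ _) (subsetIl _ _).
exists T; rewrite (kw_container_fingerprint (subxx T) TI); split=> //.
- by rewrite -cardsT; exact: leq_trans (leq_addr _ _) (kw_card dense _ _ _).
- exact: kw_disjoint.
- by have := kw_cover m [set: P] #|P| antiI; rewrite setIT.
Qed.
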